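(* Let $(X,\oplus,\odot,d)$ be any one of the spaces listed in the context, $\|x\|_{\mathcal F}=d(\tilde0,x)$. (i) If $A:X\to\mathbb{R}$ is linear and continuous at $\tilde0$, then $|A(x)|\le|||A|||_{\mathcal F}\|x\|_{\mathcal F}$ for all $x\in X$, and $|||A|||_{\mathcal F}=\sup\{|A(x)|:x\in X,\|x\|_{\mathcal F}\le1\}$. (ii) If $A:X\to X$ is linear and continuous at $\tilde0$, then $\|A(x)\|_{\mathcal F}\le|||A|||_{\mathcal F}\|x\|_{\mathcal F}$ for all $x\in X$, and $|||A|||_{\mathcal F}=\sup\{\|A(x)\|_{\mathcal F}:x\in X,\|x\|_{\mathcal F}\le1\}$.
   Context: Fuzzy numbers $\mathbb{R}_{\mathcal F}$: functions $u:\mathbb{R}\to[0,1]$ that are normal, fuzzy convex, upper semicontinuous, with compact support closure; level sets $[u]^r=[u_-(r),u_+(r)]$; $[u\oplus v]^r=[u]^r+[v]^r$, $[\lambda\odot u]^r=\lambda[u]^r$, $\tilde0=\chi_{\{0\}}$; $D(u,v)=\sup_{r\in[0,1]}\max\{|u_-(r)-v_-(r)|,|u_+(r)-v_+(r)|\}$. The admissible spaces $(X,\oplus,\odot,d)$ (operations pointwise/componentwise): $(\mathbb{R}_{\mathcal F},D)$; $C([a,b];\mathbb{R}_{\mathcal F})$ with sup-metric $D^*$; $L^p([a,b];\mathbb{R}_{\mathcal F})$ ($1\le p<\infty$) with $D_p(f,g)=(\int_a^bD(f,g)^p)^{1/p}$; $C^p([a,b];\mathbb{R}_{\mathcal F})$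 with $D_p^*(f,g)=\sum_{i=0}^pD^*(f^{(i)},g^{(i)})$; $l^p_{\mathbb{R}_{\mathcal F}}$ with $\rho_p(x,y)=(\sum_nD(x_n,y_n)^p)^{1/p}$; $m_{\mathbb{R}_{\mathcal F}}$, $c_{\mathbb{R}_{\mathcal F}}$, $c^{\tilde0}_{\mathbb{R}_{\mathcal F}}$ (bounded, convergent, null sequences) with $\mu(x,y)=\sup_nD(x_n,y_n)$; finite Cartesian products with max metric. Linear: for $A:X\to\mathbb{R}$, $A(x\oplus y)=A(x)+A(y)$, $A(\lambda\odot x)=\lambda A(x)$; for $A:X\to X$, $A(x\oplus y)=A(x)\oplus A(y)$, $A(\lambda\odot x)=\lambda\odot A(x)$ ($\lambda\in\mathbb{R}$). For such $A$ continuous at $\tilde0$, $\mathcal M_A=\{M>0:|A(x)|\le M\|x\|_{\mathcal F}\ \forall x\}$ (resp. $\{M>0:\|A(x)\|_{\mathcal F}\le M\|x\|_{\mathcal F}\ \forall x\}$) and $|||A|||_{\mathcal F}=\inf\mathcal M_A$. *)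

From mathcomp Require Import all_boot all_order all_algebra.
From mathcomp Require Import all_classical all_reals all_analysis.
Import Order.TTheory GRing.Theory Num.Theory.
Import numFieldNormedType.Exports.

Set Implicit Arguments.
Unset Strict Implicit.
Unset Printing Implicit Defensive.

Local Open Scope ring_scope.
Local Open Scope classical_set_scope.

Section Fuzzy.
Variable R : realType.

Definition is_fuzzy (u : R -> R) : Prop :=
  [/\ (forall x, 0 <= u x <= 1),
      (exists x, u x = 1),
      (forall x y l, 0 <= l <= 1 ->
          Num.min (u x) (u y) <= u (l * x + (1 - l) * y)),
      (forall x e, 0 < e -> exists2 d, 0 < d &
          forall y, `|y - x| < d -> u y < u x + e)
    & compact (closure [set x | 0 < u x])].

Record fuzzy := Fuzzy { fz :> R -> R ; fzP : is_fuzzy fz }.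

Definition level (u : fuzzy) (r : R) : set R :=
  if r == 0 then closure [set x | 0 < u x] else [set x | r <= u x].

Definition flow (u : fuzzy) (r : R) : R := inf (level u r).
Definition fupp (u : fuzzy) (r : R) : R := sup (level u r).

Definition fD (u v : fuzzy) : R :=
  sup [set Num.max `|flow u r - flow v r| `|fupp u r - fupp v r|
      | r in `[0, 1]].

Definition chi0 (x : R) : R := if x == 0 then 1 else 0.

Lemma chi0_fuzzy : is_fuzzy chi0.
Proof.
have supp : [set x | 0 < chi0 x] = [set 0].
  apply/seteqP; split => x /=; rewrite /chi0.
    by case: eqP => // _; rewrite ltxx.
  by move=> ->; rewrite eqxx ltr01.
split.
- by move=> x; rewrite /chi0; case: eqP => _; rewrite ?ler01 ?lexx.
- by exists 0; rewrite /chi0 eqxx.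
- move=> x y l _; rewrite /chi0.
  case: (x =P 0) => [->|_]; case: (y =P 0) => [->|_];
    rewrite ?mulr0 ?addr0 ?eqxx ?minxx ?ge_min ?lexx ?orbT //;
    by case: eqP; rewrite ?ler01 ?lexx ?orbT.
- move=> x e e0; case: (x =P 0) => [->|/eqP x0].
    exists 1 => // y _; rewrite /chi0 eqxx; case: eqP => _.
      by rewrite ltrDl.
    by rewrite (lt_le_trans ltr01) // lerDl ltW.
  exists `|x|; first by rewrite normr_gt0.
  move=> y hy; rewrite /chi0 (negbTE x0); case: (y =P 0) => [y0|_].
    by move: hy; rewrite y0 sub0r normrN ltxx.
  by rewrite add0r.
- rewrite supp -(proj1 (closure_id _)); first exact: compact_set1.
  apply: compact_closed; [exact: Rhausdorff|exact: compact_set1].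
Qed.

Definition fzero : fuzzy := Fuzzy chi0_fuzzy.

Definition fadd (u v : fuzzy) : fuzzy :=
  match pselect (exists w : fuzzy, forall r, 0 <= r <= 1 ->
          level w r = [set x + y | x in level u r & y in level v r]) with
  | left H => proj1_sig (cid H)
  | right _ => u
  end.

Definition fscale (l : R) (u : fuzzy) : fuzzy :=
  match pselect (exists w : fuzzy, forall r, 0 <= r <= 1 ->
          level w r = [set l * x | x in level u r]) with
  | left H => proj1_sig (cid H)
  | right _ => u
  end.

(** * Fuzzy-valued functions on [a,b] (taken 0~ outside [a,b]) *)

Definition in_ab (a b t : R) := a <= t <= b.

Definition zero_out (a b : R) (f : R -> fuzzy) :=
  forall t, ~ in_ab a b t -> f t = fzero.

Definition fcont_on (a b : R) (f : R -> fuzzy) :=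
  forall t, in_ab a b t -> forall e, 0 < e -> exists2 d, 0 < d &
    forall s, in_ab a b s -> `|s - t| < d -> fD (f s) (f t) < e.

Definition fDstar (a b : R) (f g : R -> fuzzy) : R :=
  sup [set fD (f t) (g t) | t in `[a, b]].

(* Hukuhara (H-)derivative at t of f on [a,b] (one-sided at the endpoints):
   the H-differences f(t+h) -H f(t) and f(t) -H f(t-h) exist and, divided
   by h, tend to g as h -> 0+. *)
Definition Hderiv_at (a b : R) (f : R -> fuzzy) (t : R) (g : fuzzy) :=
  forall e, 0 < e -> exists2 d, 0 < d & forall h, 0 < h < d ->
    (t + h <= b -> exists2 w : fuzzy, f (t + h) = fadd (f t) w &
                                      fD (fscale h^-1 w) g < e) /\
    (a <= t - h -> exists2 w : fuzzy, f t = fadd (f (t - h)) w &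
                                      fD (fscale h^-1 w) g < e).

(* the H-derivative function (0~ outside [a,b] or where it does not exist) *)
Definition hderiv (a b : R) (f : R -> fuzzy) (t : R) : fuzzy :=
  match pselect (exists g : fuzzy, in_ab a b t /\ Hderiv_at a b f t g) with
  | left H => proj1_sig (cid H)
  | right _ => fzero
  end.

Definition is_Cp (a b : R) (p : nat) (f : R -> fuzzy) :=
  zero_out a b f /\
  forall i, (i <= p)%N ->
    fcont_on a b (iter i (hderiv a b) f) /\
    ((i < p)%N -> forall t, in_ab a b t ->
        exists g, Hderiv_at a b (iter i (hderiv a b) f) t g).

Definition is_Lp (a b p : R) (f : R -> fuzzy) :=
  [/\ zero_out a b f,
      (forall r, 0 <= r <= 1 ->
         measurable_fun `[a, b] (fun t => flow (f t) r) /\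
         measurable_fun `[a, b] (fun t => fupp (f t) r))
    & (lebesgue_measure : set _ -> \bar R).-integrable `[a, b]
          (fun t => ((fD (f t) fzero) `^ p)%:E)].

Definition fDp (a b p : R) (f g : R -> fuzzy) : R :=
  (fine (\int[lebesgue_measure]_(t in `[a, b]) ((fD (f t) (g t)) `^ p)%:E))
     `^ (p^-1).

Definition is_lp (p : R) (x : nat -> fuzzy) :=
  (\sum_(n <oo) ((fD (x n) fzero) `^ p)%:E < +oo)%E.

Definition rho_p (p : R) (x y : nat -> fuzzy) : R :=
  (fine (\sum_(n <oo) ((fD (x n) (y n)) `^ p)%:E)%E) `^ (p^-1).

Definition is_bdd (x : nat -> fuzzy) := exists M, forall n, fD (x n) fzero <= M.

Definition is_conv (x : nat -> fuzzy) :=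
  exists l : fuzzy, forall e, 0 < e -> exists N, forall n, (N <= n)%N ->
    fD (x n) l < e.

Definition is_null (x : nat -> fuzzy) :=
  forall e, 0 < e -> exists N, forall n, (N <= n)%N -> fD (x n) fzero < e.

Definition mu_sup (x y : nat -> fuzzy) : R := sup (range (fun n => fD (x n) (y n))).

Inductive fspace :=
| S_RF
| S_C   of R & R
| S_Lp  of R & R & R
| S_Cp  of R & R & nat
| S_lp  of R
| S_m
| S_c
| S_c0
| S_prod of fspace & fspace.

Fixpoint wf_space (s : fspace) : Prop :=
  match s with
  | S_RF | S_m | S_c | S_c0 => True
  | S_C a b => a < b
  | S_Lp a b p => a < b /\ 1 <= p
  | S_Cp a b _ => a < b
  | S_lp p => 1 <= p
  | S_prod s1 s2 => wf_space s1 /\ wf_space s2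
  end.

(* ambient type of each fspace; membership is given by [smem] below *)
Fixpoint carrier (s : fspace) : Type :=
  match s with
  | S_RF => fuzzy
  | S_C _ _ | S_Lp _ _ _ | S_Cp _ _ _ => R -> fuzzy
  | S_lp _ | S_m | S_c | S_c0 => nat -> fuzzy
  | S_prod s1 s2 => (carrier s1 * carrier s2)%type
  end.

Fixpoint smem (s : fspace) : carrier s -> Prop :=
  match s return carrier s -> Prop with
  | S_RF => fun _ => True
  | S_C a b => fun f => zero_out a b f /\ fcont_on a b f
  | S_Lp a b p => fun f => is_Lp a b p f
  | S_Cp a b p => fun f => is_Cp a b p f
  | S_lp p => fun x => is_lp p x
  | S_m => fun x => is_bdd x
  | S_c => fun x => is_conv x
  | S_c0 => fun x => is_null x
  | S_prod s1 s2 => fun x => smem x.1 /\ smem x.2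
  end.

Fixpoint szero (s : fspace) : carrier s :=
  match s return carrier s with
  | S_RF => fzero
  | S_C _ _ | S_Lp _ _ _ | S_Cp _ _ _ => fun _ => fzero
  | S_lp _ | S_m | S_c | S_c0 => fun _ => fzero
  | S_prod s1 s2 => (szero s1, szero s2)
  end.

Fixpoint sadd (s : fspace) : carrier s -> carrier s -> carrier s :=
  match s return carrier s -> carrier s -> carrier s with
  | S_RF => fadd
  | S_C _ _ | S_Lp _ _ _ | S_Cp _ _ _ => fun f g t => fadd (f t) (g t)
  | S_lp _ | S_m | S_c | S_c0 => fun x y n => fadd (x n) (y n)
  | S_prod s1 s2 => fun x y => (sadd x.1 y.1, sadd x.2 y.2)
  end.

Fixpoint sscale (s : fspace) (l : R) : carrier s -> carrier s :=
  match s return carrier s -> carrier s with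
  | S_RF => fscale l
  | S_C _ _ | S_Lp _ _ _ | S_Cp _ _ _ => fun f t => fscale l (f t)
  | S_lp _ | S_m | S_c | S_c0 => fun x n => fscale l (x n)
  | S_prod s1 s2 => fun x => (sscale l x.1, sscale l x.2)
  end.

Fixpoint sdist (s : fspace) : carrier s -> carrier s -> R :=
  match s return carrier s -> carrier s -> R with
  | S_RF => fD
  | S_C a b => fDstar a b
  | S_Lp a b p => fDp a b p
  | S_Cp a b p => fun f g =>
      \sum_(i < p.+1) fDstar a b (iter i (hderiv a b) f) (iter i (hderiv a b) g)
  | S_lp p => rho_p p
  | S_m | S_c | S_c0 => mu_sup
  | S_prod s1 s2 => fun x y => Num.max (sdist x.1 y.1) (sdist x.2 y.2)
  end.

Definition snorm (s : fspace) (x : carrier s) : R := sdist (szero s) x.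

Definition lin_functional (s : fspace) (A : carrier s -> R) :=
  (forall x y, smem x -> smem y -> A (sadd x y) = A x + A y) /\
  (forall l x, smem x -> A (sscale l x) = l * A x).

Definition cont0_functional (s : fspace) (A : carrier s -> R) :=
  forall e, 0 < e -> exists2 d, 0 < d &
    forall x, smem x -> sdist (szero s) x < d -> `|A x - A (szero s)| < e.

Definition opnorm_functional (s : fspace) (A : carrier s -> R) : R :=
  inf [set M | 0 < M /\ forall x, smem x -> `|A x| <= M * snorm x].

Definition lin_operator (s : fspace) (A : carrier s -> carrier s) :=
  (forall x, smem x -> smem (A x)) /\
  (forall x y, smem x -> smem y -> A (sadd x y) = sadd (A x) (A y)) /\
  (forall l x, smem x -> A (sscale l x) = sscale l (A x)).

Definition cont0_operator (s : fspace) (A : carrier s -> carrier s) :=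
  forall e, 0 < e -> exists2 d, 0 < d &
    forall x, smem x -> sdist (szero s) x < d -> sdist (A (szero s)) (A x) < e.

Definition opnorm_operator (s : fspace) (A : carrier s -> carrier s) : R :=
  inf [set M | 0 < M /\ forall x, smem x -> snorm (A x) <= M * snorm x].

End Fuzzy.

(* Everything rests on absolute homogeneity of the norm, ||c x|| = |c| ||x||, in each
   admissible space.  Scalar multiplication acts on level sets by [c u]^r = c [u]^r, so it
   multiplies D by |c|; for C^p one also needs that Hukuhara derivatives commute with
   scaling, which requires their uniqueness, hence cancellation in the fuzzy sum, hence the
   existence of the sum (built from its level sets [u]^r + [v]^r).  Then the classical
   argument applies: continuity at 0~ gives |A x| < 1 on a ball of radius d, rescaling gives
   |A x| <= (2/d) ||x||, and rescaling every x to norm 1 shows that the infimum of the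
   admissible constants is the supremum over the unit ball. *)

From mathcomp Require Import all_boot all_order all_algebra.
From mathcomp Require Import all_classical all_reals all_analysis.
From mathcomp Require Import ring lra.
Import Order.TTheory GRing.Theory Num.Theory.
Import numFieldNormedType.Exports.

Set Implicit Arguments.
Unset Strict Implicit.
Unset Printing Implicit Defensive.

Local Open Scope ring_scope.
Local Open Scope classical_set_scope.

Section RealSupremum.
Variable R : realType.
Implicit Types (S : set R) (k : R).

Lemma sup_ge0 S : (forall x, S x -> 0 <= x) -> 0 <= sup S.
Proof.
move=> S_ge0; have [supS|noS] := pselect (has_sup S); last by rewrite sup_out.
have [x Sx] := supS.1.
by apply: le_trans (S_ge0 _ Sx) _; apply: sup_upper_bound.
Qed.

Lemma supZ S k : 0 <= k -> sup [set k * x | x in S] = k * sup S.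
Proof.
rewrite le_eqVlt => /orP[/eqP<-|k0].
  rewrite mul0r; have [[x Sx]|/nonemptyPn->] := pselect (S !=set0); last first.
    by rewrite image_set0 sup0.
  suff -> : [set 0 * x | x in S] = [set 0] by rewrite sup1.
  apply/seteqP; split=> y /=; first by case=> z _ <-; rewrite mul0r.
  by move=> ->; exists x; rewrite ?mul0r.
have [[x Sx]|/nonemptyPn->] := pselect (S !=set0); last first.
  by rewrite image_set0 sup0 mulr0.
have kS0 : [set k * x | x in S] !=set0 by exists (k * x), x.
have [[M SM]|Sunb] := pselect (has_ubound S); last first.
  have kSunb : ~ has_ubound [set k * x | x in S].
    case=> M kSM; apply: Sunb; exists (M / k) => y Sy.
    by rewrite ler_pdivlMr // mulrC; apply: kSM; exists y.
  by rewrite !sup_out ?mulr0 // => -[].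
have supS : has_sup S by split; [exists x | exists M].
apply/eqP; rewrite eq_le; apply/andP; split.
  apply: ge_sup => // _ [y Sy <-]; rewrite ler_pM2l //.
  exact: sup_upper_bound.
have supkS : has_sup [set k * x | x in S].
  by split=> //; exists (k * M) => _ [y Sy <-]; rewrite ler_pM2l // SM.
rewrite -ler_pdivlMl //; apply: ge_sup; first by exists x.
by move=> y Sy; rewrite ler_pdivlMl //; apply: sup_upper_bound => //; exists y.
Qed.

Lemma sup_imageZ (T : Type) (D : set T) (F : T -> R) k : 0 <= k ->
  sup [set k * F t | t in D] = k * sup [set F t | t in D].
Proof. by move=> k0; rewrite -supZ // image_comp. Qed.

Lemma infZ S k : 0 <= k -> inf [set k * x | x in S] = k * inf S.
Proof.
move=> k0; rewrite /inf mulrN -supZ // !image_comp; congr (- sup _).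
by apply: eq_imagel => x _ /=; rewrite mulrN.
Qed.

Lemma supZ_le0 S k : k <= 0 -> sup [set k * x | x in S] = k * inf S.
Proof.
move=> k0; rewrite /inf mulrN -mulNr -supZ ?oppr_ge0 // image_comp.
by congr sup; apply: eq_imagel => x _ /=; rewrite mulrNN.
Qed.

Lemma infZ_le0 S k : k <= 0 -> inf [set k * x | x in S] = k * sup S.
Proof.
move=> k0; rewrite /inf image_comp -[in RHS](opprK k) mulNr -supZ ?oppr_ge0 //.
by congr (- sup _); apply: eq_imagel => x _ /=; rewrite mulNr.
Qed.

End RealSupremum.

Section RealSets.
Variable R : realType.
Implicit Types S : set R.

Lemma closureRP S x :
  closure S x <-> forall e, 0 < e -> exists y, S y /\ `|x - y| < e.
Proof.
split.
  move=> clx e e0; have [y [Sy xy]] := clx _ (nbhsx_ballx x e e0).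
  by exists y; split => //; move: xy; rewrite -ball_normE.
move=> near_x B /nbhs_ballP [e /= e0 eB]; have [y [Sy xy]] := near_x e e0.
by exists y; split => //; apply: eB; rewrite -ball_normE.
Qed.

Lemma closureZ S c : c != 0 ->
  closure [set c * y | y in S] = [set c * y | y in closure S].
Proof.
move=> c0; have c_gt0 : 0 < `|c| by rewrite normr_gt0.
apply/seteqP; split => x.
  move/closureRP => near_x; exists (x / c); last by rewrite mulrC divfK.
  apply/closureRP => e e0.
  have [_ [[y Sy <-] xy]] := near_x (e * `|c|) (mulr_gt0 e0 c_gt0).
  exists y; split => //.
  by rewrite -(ltr_pM2r c_gt0) -normrM mulrBl divfK // mulrC.
case=> y /closureRP near_y <-; apply/closureRP => e e0.
have [z [Sz yz]] := near_y (e / `|c|) (divr_gt0 e0 c_gt0).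
exists (c * z); split; first by exists z.
by rewrite -mulrBr normrM mulrC -ltr_pdivlMr.
Qed.

Lemma closure_sub_itv S a b : S `<=` [set x | a <= x <= b] ->
  closure S `<=` [set x | a <= x <= b].
Proof.
move=> Sab z /closureRP near_z /=; apply/andP; split; rewrite leNgt; apply/negP => zab.
  have [y [Sy zy]] := near_z (a - z) ltac:(by rewrite subr_gt0).
  have /andP[ay _] := Sab _ Sy.
  by move: zy; rewrite distrC ltr_norml => /andP[_ ?]; lra.
have [y [Sy zy]] := near_z (z - b) ltac:(by rewrite subr_gt0).
have /andP[_ yb] := Sab _ Sy.
by move: zy; rewrite ltr_norml => /andP[_ ?]; lra.
Qed.

Lemma convex_comb (x y z : R) : x <= z <= y ->
  exists2 l, 0 <= l <= 1 & z = l * x + (1 - l) * y.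
Proof.
case/andP=> xz zy; have [xy|xy] := eqVneq x y.
  subst y; exists 1; rewrite ?ler01 ?lexx //.
  by rewrite subrr mul0r addr0 mul1r; apply/eqP; rewrite eq_le zy xz.
have yx : 0 < y - x by rewrite subr_gt0 lt_neqAle xy (le_trans xz zy).
exists ((y - z) / (y - x)).
  by rewrite divr_ge0 ?subr_ge0 ?(le_trans xz zy) //= ler_pdivrMr // mul1r; lra.
by field; rewrite gt_eqF.
Qed.

Lemma addset_itv (a b c d : R) : a <= b -> c <= d ->
  [set x + y | x in [set x | a <= x <= b] & y in [set y | c <= y <= d]] =
  [set z | a + c <= z <= b + d].
Proof.
move=> ab cd; apply/seteqP; split => z /=.
  by case=> x /andP[? ?] [y /andP[? ?] <-]; apply/andP; split; lra.
case/andP=> ? ?; have [bzc|zcb] := lerP b (z - c).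
  by exists b; [lra|exists (z - b); [lra|rewrite addrC subrK]].
by exists (z - c); [lra|exists c; [lra|rewrite subrK]].
Qed.

Lemma itv_inj (a b c d : R) : a <= b -> c <= d ->
  [set z | a <= z <= b] = [set z | c <= z <= d] -> a = c /\ b = d.
Proof.
move=> ab cd abcd.
have /= /andP[? ?] : [set z | c <= z <= d] a by rewrite -abcd /= lexx ab.
have /= /andP[? ?] : [set z | c <= z <= d] b by rewrite -abcd /= lexx ab.
have /= /andP[? ?] : [set z | a <= z <= b] c by rewrite abcd /= lexx cd.
have /= /andP[? ?] : [set z | a <= z <= b] d by rewrite abcd /= lexx cd.
by split; apply/eqP; rewrite eq_le; apply/andP; split.
Qed.

End RealSets.

Section FuzzyLevels.
Variable R : realType.
Implicit Types (u v : fuzzy R) (r s : R).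

Lemma fuzzy_ge0 u x : 0 <= u x.
Proof. by case: (fzP u) => /(_ x)/andP[]. Qed.

Lemma fuzzy_le1 u x : u x <= 1.
Proof. by case: (fzP u) => /(_ x)/andP[]. Qed.

Lemma fuzzy_normal u : exists x, u x = 1.
Proof. by case: (fzP u). Qed.

Lemma fuzzy_convex u x y l : 0 <= l <= 1 ->
  Num.min (u x) (u y) <= u (l * x + (1 - l) * y).
Proof. by case: (fzP u) => _ _ conv _ _; apply: conv. Qed.

Lemma fuzzy_usc u x e : 0 < e -> exists2 d, 0 < d &
  forall y, `|y - x| < d -> u y < u x + e.
Proof. by case: (fzP u) => _ _ _ usc _; apply: usc. Qed.

Lemma fuzzy_compact u : compact (closure [set x | 0 < u x]).
Proof. by case: (fzP u). Qed.

Lemma fuzzy_between u x y z : x <= z <= y -> Num.min (u x) (u y) <= u z.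
Proof. by move=> /convex_comb [l l01 ->]; apply: fuzzy_convex. Qed.

Lemma levelP u r : 0 < r -> level u r = [set x | r <= u x].
Proof. by move=> r0; rewrite /level gt_eqF. Qed.

Lemma level0 u : level u 0 = closure [set x | 0 < u x].
Proof. by rewrite /level eqxx. Qed.

Lemma fuzzy_ext u v : (forall r, 0 < r <= 1 -> level u r = level v r) -> u = v.
Proof.
suff le_uv : forall u v, (forall r, 0 < r <= 1 -> level u r = level v r) ->
    forall x, u x <= v x.
  move=> uv; have {}uv : fz u = fz v.
    apply: funext => x; apply/eqP; rewrite eq_le !le_uv // => r r01.
    by rewrite uv.
  case: u v uv => f f_fuzzy [g g_fuzzy] /= fg; subst g.
  by congr Fuzzy; exact: Prop_irrelevance.
move=> {}u {}v uv x; have [ux0|ux0] := lerP (u x) 0.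
  exact: le_trans ux0 (fuzzy_ge0 _ _).
have /uv : 0 < u x <= 1 by rewrite ux0 fuzzy_le1.
rewrite !levelP // => /seteqP[+ _] => /(_ x); apply; exact: lexx.
Qed.

Lemma level_nonempty u r : 0 <= r <= 1 -> level u r !=set0.
Proof.
case/andP; rewrite le_eqVlt => /orP[/eqP<-|r0] r1; have [x ux] := fuzzy_normal u.
  by exists x; rewrite level0; apply: subset_closure; rewrite /= ux ltr01.
by exists x; rewrite levelP //= ux.
Qed.

Lemma level_le u r s : 0 <= s <= r -> level u r `<=` level u s.
Proof.
case/andP; rewrite le_eqVlt => /orP[/eqP<-|s0] sr x; last first.
  by rewrite !levelP ?(lt_le_trans s0 sr) //= => /(le_trans sr).
move: sr; rewrite le_eqVlt => /orP[/eqP<-//|r0].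
by rewrite levelP // level0 => /(lt_le_trans r0) ?; apply: subset_closure.
Qed.

Lemma level_bounded u : exists M, forall r x, 0 <= r -> level u r x -> `|x| <= M.
Proof.
have [M [_ supM]] := compact_bounded (@fuzzy_compact u).
exists (M + 1) => r x r0; have r00 : 0 <= (0 : R) <= r by rewrite lexx.
move=> /(level_le r00) ux.
by apply: (supM (M + 1)); rewrite ?ltrDl // -level0.
Qed.

Lemma level_has_lbound u r : 0 <= r -> has_lbound (level u r).
Proof.
move=> r0; have [M boundM] := level_bounded u; exists (- M) => x ux.
by have := boundM _ _ r0 ux; rewrite ler_norml => /andP[].
Qed.

Lemma level_has_ubound u r : 0 <= r -> has_ubound (level u r).
Proof.
move=> r0; have [M boundM] := level_bounded u; exists M => x ux.
by have := boundM _ _ r0 ux; rewrite ler_norml => /andP[].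
Qed.

Lemma level_closed u r : 0 <= r -> closure (level u r) `<=` level u r.
Proof.
rewrite le_eqVlt => /orP[/eqP<-|r0]; first by rewrite level0; exact: closed_closure.
rewrite levelP // => x /closureRP near_x /=; rewrite leNgt; apply/negP => uxr.
have [d d0 usc_x] := fuzzy_usc u x (ltac:(by rewrite subr_gt0) : 0 < r - u x).
have [y [ry xy]] := near_x d d0.
by have := usc_x y; rewrite distrC => /(_ xy); rewrite addrC subrK ltNge ry.
Qed.

(* [level u 0] is the closure of the support, not a superlevel set: approximate [x] and
   [y] from inside the support. *)
Lemma level_convex u r x y z : 0 <= r -> level u r x -> level u r y ->
  x <= z <= y -> level u r z.
Proof.
rewrite le_eqVlt => /orP[/eqP<-|r0]; last first.
  rewrite !levelP //= => rx ry /(fuzzy_between u).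
  by apply: le_trans; rewrite le_min rx ry.
rewrite !level0 => /closureRP near_x /closureRP near_y /andP[xz zy].
have [->|zx] := eqVneq z x; first exact/closureRP.
have [->|zy'] := eqVneq z y; first exact/closureRP.
have [x' [ux' xx']] := near_x (z - x) (ltac:(by rewrite subr_gt0 lt_neqAle eq_sym zx)).
have [y' [uy' yy']] := near_y (y - z) (ltac:(by rewrite subr_gt0 lt_neqAle zy' zy)).
apply: subset_closure => /=.
have : x' <= z <= y'.
  by move: xx' yy'; rewrite !ltr_norml => /andP[? ?] /andP[? ?]; apply/andP; split; lra.
by move/(fuzzy_between u); apply: lt_le_trans; rewrite lt_min ux' uy'.
Qed.

Lemma flow_in u r : 0 <= r <= 1 -> level u r (flow u r).
Proof.
move=> r01; have r0 : 0 <= r by case/andP: r01.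
apply: level_closed => //; apply/closureRP => e e0.
have [y uy ye] := inf_adherent e0 (conj (level_nonempty u r01) (level_has_lbound u r0)).
exists y; split => //; rewrite /flow distrC ger0_norm ?ltrBlDl //.
by rewrite subr_ge0; apply: ge_inf => //; exact: level_has_lbound.
Qed.

Lemma fupp_in u r : 0 <= r <= 1 -> level u r (fupp u r).
Proof.
move=> r01; have r0 : 0 <= r by case/andP: r01.
apply: level_closed => //; apply/closureRP => e e0.
have sup_ur : has_sup (level u r).
  by split; [exact: level_nonempty|exact: level_has_ubound].
have [y uy ye] := sup_adherent e0 sup_ur.
exists y; split => //; rewrite /fupp ger0_norm; first by rewrite ltrBlDr addrC -ltrBlDr.
by rewrite subr_ge0; apply: sup_upper_bound.
Qed.

Lemma level_itv u r : 0 <= r <= 1 ->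
  level u r = [set x | flow u r <= x <= fupp u r].
Proof.
move=> r01; have r0 : 0 <= r by case/andP: r01.
apply/seteqP; split => x /=; last exact: level_convex r0 (flow_in u r01) (fupp_in u r01).
move=> ux; apply/andP; split; first by apply: ge_inf => //; exact: level_has_lbound.
by apply: sup_upper_bound => //; split; [exact: level_nonempty|exact: level_has_ubound].
Qed.

Lemma flow_le_fupp u r : 0 <= r <= 1 -> flow u r <= fupp u r.
Proof. by move=> r01; have := fupp_in u r01; rewrite level_itv // => /andP[]. Qed.

Lemma flow_le u r s : 0 <= s -> s <= r -> r <= 1 -> flow u s <= flow u r.
Proof.
move=> s0 sr r1; have r01 : 0 <= r <= 1 by rewrite r1 (le_trans s0 sr).
have := level_le (_ : 0 <= s <= r) (flow_in u r01); rewrite s0 sr => /(_ isT).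
by rewrite level_itv ?s0 ?(le_trans sr r1) // => /andP[].
Qed.

Lemma fupp_ge u r s : 0 <= s -> s <= r -> r <= 1 -> fupp u r <= fupp u s.
Proof.
move=> s0 sr r1; have r01 : 0 <= r <= 1 by rewrite r1 (le_trans s0 sr).
have := level_le (_ : 0 <= s <= r) (fupp_in u r01); rewrite s0 sr => /(_ isT).
by rewrite level_itv ?s0 ?(le_trans sr r1) // => /andP[].
Qed.

Lemma fuzzy_endpoints_ext u v :
  (forall r, 0 <= r <= 1 -> flow u r = flow v r /\ fupp u r = fupp v r) -> u = v.
Proof.
move=> uv; apply: fuzzy_ext => r /andP[r0 r1]; have r01 : 0 <= r <= 1 by rewrite ltW.
by rewrite !level_itv //; have [-> ->] := uv r r01.
Qed.

Lemma fuzzy_endpoints_bounded u :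
  exists M, forall r, 0 <= r <= 1 -> `|flow u r| <= M /\ `|fupp u r| <= M.
Proof.
have [M boundM] := level_bounded u; exists M => r r01; have r0 : 0 <= r by case/andP: r01.
by split; apply: (boundM r) => //; [apply: flow_in|apply: fupp_in].
Qed.

End FuzzyLevels.

Section FuzzyScale.
Variable R : realType.
Implicit Types (u v : fuzzy R) (r c : R).

Lemma level_fzero r : 0 <= r <= 1 -> level (fzero R) r = [set 0].
Proof.
have supp0 : [set x | 0 < chi0 x] = [set (0 : R)].
  apply/seteqP; split => x /=; rewrite /chi0; last by move=> ->; rewrite eqxx ltr01.
  by case: eqP => // _; rewrite ltxx.
case/andP; rewrite le_eqVlt => /orP[/eqP<-|r0] r1.
  rewrite level0 /= supp0; apply/esym/closure_id.
  by apply: compact_closed; [exact: Rhausdorff|exact: compact_set1].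
rewrite levelP //; apply/seteqP; split => x /=; rewrite /chi0; last by move=> ->; rewrite eqxx.
by case: eqP => // _; rewrite leNgt r0.
Qed.

Definition fscale_fun (c : R) u (x : R) := u (x / c).

Lemma fscale_fun_supp c u : c != 0 ->
  [set x | 0 < fscale_fun c u x] = [set c * y | y in [set y | 0 < u y]].
Proof.
move=> c0; apply/seteqP; split => x /=; first by exists (x / c); rewrite // mulrC divfK.
by case=> y uy <-; rewrite /fscale_fun mulrAC divff // mul1r.
Qed.

Lemma fscale_fun_fuzzy c u : c != 0 -> is_fuzzy (fscale_fun c u).
Proof.
move=> c0; have c_gt0 : 0 < `|c| by rewrite normr_gt0.
split.
- by move=> x; rewrite fuzzy_ge0 fuzzy_le1.
- by have [x ux] := fuzzy_normal u; exists (c * x); rewrite /fscale_fun mulrAC divff // mul1r.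
- move=> x y l l01; rewrite /fscale_fun mulrDl -!mulrA; exact: fuzzy_convex.
- move=> x e e0; have [d d0 usc_x] := fuzzy_usc u (x / c) e0.
  exists (d * `|c|) => [|y xy]; first exact: mulr_gt0.
  by apply: usc_x; rewrite -mulrBl normrM normfV ltr_pdivrMr.
- rewrite fscale_fun_supp // closureZ //.
  apply: continuous_compact; last exact: (@fuzzy_compact _ u).
  by apply: continuous_subspaceT => x; exact: mulrl_continuous.
Qed.

Lemma level_fscale_fun c u (c0 : c != 0) r : 0 <= r ->
  level (Fuzzy (fscale_fun_fuzzy u c0)) r = [set c * x | x in level u r].
Proof.
rewrite le_eqVlt => /orP[/eqP<-|r0]; first by rewrite !level0 /= fscale_fun_supp // closureZ.
rewrite !levelP //; apply/seteqP; split => x /=; first by exists (x / c); rewrite // mulrC divfK.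
by case=> y uy <-; rewrite /fscale_fun mulrAC divff // mul1r.
Qed.

Lemma level_fscale c u r : 0 <= r <= 1 ->
  level (fscale c u) r = [set c * x | x in level u r].
Proof.
move=> r01; rewrite /fscale; case: pselect => [scaled|not_scaled].
  by case: (cid scaled) => w /= ->.
exfalso; apply: not_scaled; have [->|c0] := eqVneq c 0; last first.
  by exists (Fuzzy (fscale_fun_fuzzy u c0)) => s /andP[s0 _]; rewrite level_fscale_fun.
exists (fzero R) => s s01; rewrite level_fzero //; have [x ux] := level_nonempty u s01.
apply/seteqP; split => y /=; first by move=> ->; exists x; rewrite ?mul0r.
by case=> z _ <-; rewrite mul0r.
Qed.

Lemma fscale_fzero c : fscale c (fzero R) = fzero R.
Proof.
apply: fuzzy_ext => r /andP[r0 r1]; have r01 : 0 <= r <= 1 by rewrite ltW.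
rewrite level_fscale // level_fzero //; apply/seteqP; split => y /=.
  by case=> z -> <-; rewrite mulr0.
by move=> ->; exists 0; rewrite ?mulr0.
Qed.

Lemma fscale0 u : fscale 0 u = fzero R.
Proof.
apply: fuzzy_ext => r /andP[r0 r1]; have r01 : 0 <= r <= 1 by rewrite ltW.
rewrite level_fscale // level_fzero //; have [x ux] := level_nonempty u r01.
apply/seteqP; split => y /=; first by case=> z _ <-; rewrite mul0r.
by move=> ->; exists x; rewrite ?mul0r.
Qed.

Lemma fscaleA a b u : fscale a (fscale b u) = fscale (a * b) u.
Proof.
apply: fuzzy_ext => r /andP[r0 r1]; have r01 : 0 <= r <= 1 by rewrite ltW.
rewrite !level_fscale // image_comp; apply: eq_imagel => x _ /=; exact: mulrA.
Qed.

Lemma fscale1 u : fscale 1 u = u.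
Proof.
apply: fuzzy_ext => r /andP[r0 r1]; have r01 : 0 <= r <= 1 by rewrite ltW.
by rewrite level_fscale // (eq_imagel (f' := id)) ?image_id // => x _; rewrite mul1r.
Qed.

Lemma flow_fscale c u r : 0 <= r <= 1 ->
  flow (fscale c u) r = if 0 <= c then c * flow u r else c * fupp u r.
Proof.
move=> r01; rewrite /flow /fupp level_fscale //; case: ifPn => c0; first exact: infZ.
by apply: infZ_le0; rewrite ltW // ltNge.
Qed.

Lemma fupp_fscale c u r : 0 <= r <= 1 ->
  fupp (fscale c u) r = if 0 <= c then c * fupp u r else c * flow u r.
Proof.
move=> r01; rewrite /flow /fupp level_fscale //; case: ifPn => c0; first exact: supZ.
by apply: supZ_le0; rewrite ltW // ltNge.
Qed.

End FuzzyScale.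

Section FuzzyDistance.
Variable R : realType.
Implicit Types (u v w : fuzzy R) (r c : R).

Lemma fD_ge0 u v : 0 <= fD u v.
Proof. by apply: sup_ge0 => _ [r _ <-]; rewrite le_max normr_ge0. Qed.

Lemma fDC u v : fD u v = fD v u.
Proof.
by rewrite /fD; congr sup; apply: eq_imagel => r _; rewrite distrC [X in Num.max _ X]distrC.
Qed.

Lemma fDxx u : fD u u = 0.
Proof.
rewrite /fD (_ : [set _ | r in _] = [set 0]) ?sup1 //.
apply/seteqP; split => y /=; first by case=> r _ <-; rewrite !subrr normr0 maxxx.
by move=> ->; exists 0; rewrite ?subrr ?normr0 ?maxxx // in_itv /= lexx ler01.
Qed.

Lemma fD_has_sup u v :
  has_sup [set Num.max `|flow u r - flow v r| `|fupp u r - fupp v r| | r in `[(0 : R), 1]].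
Proof.
split; first by eexists; exists 0; rewrite /= ?in_itv /= ?lexx ?ler01.
have [Mu bound_u] := fuzzy_endpoints_bounded u.
have [Mv bound_v] := fuzzy_endpoints_bounded v.
exists (Mu + Mv) => y [r]; rewrite /= in_itv /= => r01 <-.
have [? ?] := bound_u r r01; have [? ?] := bound_v r r01.
by rewrite ge_max; apply/andP; split; apply: le_trans (ler_normB _ _) _; exact: lerD.
Qed.

Lemma fD_ge_endpoints u v r : 0 <= r <= 1 ->
  `|flow u r - flow v r| <= fD u v /\ `|fupp u r - fupp v r| <= fD u v.
Proof.
move=> r01; apply/andP; rewrite -ge_max.
by apply: sup_upper_bound; [exact: fD_has_sup|exists r; rewrite /= ?in_itv].
Qed.

Lemma fD_triangle u v w : fD u w <= fD u v + fD v w.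
Proof.
apply: ge_sup => [|y [r]]; first exact: (fD_has_sup u w).1.
rewrite /= in_itv /= => r01 <-.
have [? ?] := fD_ge_endpoints u v r01; have [? ?] := fD_ge_endpoints v w r01.
rewrite ge_max; apply/andP; split.
  by apply: le_trans (ler_distD (flow v r) _ _) _; exact: lerD.
by apply: le_trans (ler_distD (fupp v r) _ _) _; exact: lerD.
Qed.

Lemma fD_eq0 u v : fD u v = 0 -> u = v.
Proof.
move=> uv0; apply: fuzzy_endpoints_ext => r r01.
have [] := fD_ge_endpoints u v r01.
by rewrite uv0 !normr_le0 !subr_eq0 => /eqP-> /eqP->.
Qed.

Lemma fD_fscale c u v : fD (fscale c u) (fscale c v) = `|c| * fD u v.
Proof.
rewrite /fD -sup_imageZ //; congr sup; apply: eq_imagel => r; rewrite /= in_itv /= => r01.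
rewrite !flow_fscale // !fupp_fscale //.
by case: ifP => _; rewrite -!mulrBr !normrM maxr_pMr // maxC.
Qed.

Lemma fD0_fscale c u : fD (fzero R) (fscale c u) = `|c| * fD (fzero R) u.
Proof. by rewrite -fD_fscale fscale_fzero. Qed.

Lemma fD_fscale_lt c u v e : 0 < e -> fD u v < e / (`|c| + 1) ->
  fD (fscale c u) (fscale c v) < e.
Proof.
move=> e0 uv; have c1 : 0 < `|c| + 1 by rewrite ltr_wpDl.
rewrite fD_fscale; apply: le_lt_trans (_ : `|c| * (e / (`|c| + 1)) < e).
  by rewrite ler_wpM2l // ltW.
by rewrite mulrA ltr_pdivrMr // mulrC ltr_pM2l //; lra.
Qed.

End FuzzyDistance.

Section FuzzySum.
Variable R : realType.
Implicit Types (u v w : fuzzy R) (r s z e : R).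

(* Otherwise [p := flow u r - e] lies in every level below [r], hence [r <= u p]. *)
Lemma flow_approx_left u r e : 0 < r -> r <= 1 -> 0 < e ->
  exists2 s, 0 < s < r & flow u r - e < flow u s.
Proof.
move=> r0 r1 e0; apply: contrapT => far; have r01 : 0 <= r <= 1 by rewrite ltW.
set p := flow u r - e.
suff : level u r p by rewrite level_itv //= => /andP[]; rewrite /p; lra.
rewrite levelP //= leNgt; apply/negP => upr; set s := (u p + r) / 2.
have u0 := fuzzy_ge0 u p.
have s0 : 0 < s by rewrite /s; lra.
have sr : s < r by rewrite /s; lra.
have s01 : 0 <= s <= 1 by apply/andP; split; lra.
have flow_s : flow u s <= p.
  by rewrite leNgt; apply/negP => ps; apply: far; exists s; rewrite ?s0.
have := flow_le_fupp u r01; have := fupp_ge u (ltW s0) (ltW sr) r1.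
move=> ? ?; have : level u s p by rewrite level_itv //= flow_s /p; lra.
by rewrite levelP //= /s; lra.
Qed.

Lemma flow_fscaleN1 u r : 0 <= r <= 1 -> flow (fscale (-1) u) r = - fupp u r.
Proof. by move=> r01; rewrite flow_fscale // ler0N1 mulN1r. Qed.

Lemma flowD_approx_left u v r e : 0 < r -> r <= 1 -> 0 < e ->
  exists2 s, 0 < s < r & flow u r + flow v r - e < flow u s + flow v s.
Proof.
move=> r0 r1 e0; have e2 : 0 < e / 2 by rewrite divr_gt0.
have [s1 /andP[s1_gt0 s1r] u_s1] := flow_approx_left u r0 r1 e2.
have [s2 /andP[s2_gt0 s2r] v_s2] := flow_approx_left v r0 r1 e2.
have sr : Num.max s1 s2 < r by rewrite gt_max s1r s2r.
exists (Num.max s1 s2); first by rewrite sr lt_max s1_gt0.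
have r1' := ltW (lt_le_trans sr r1).
have s1_max : s1 <= Num.max s1 s2 by rewrite le_max lexx.
have s2_max : s2 <= Num.max s1 s2 by rewrite le_max lexx orbT.
have := flow_le u (ltW s1_gt0) s1_max r1'; have := flow_le v (ltW s2_gt0) s2_max r1'.
by move: u_s1 v_s2; lra.
Qed.

(* Scaling by [-1] turns upper endpoints into lower ones. *)
Lemma fuppD_approx_left u v r e : 0 < r -> r <= 1 -> 0 < e ->
  exists2 s, 0 < s < r & fupp u s + fupp v s < fupp u r + fupp v r + e.
Proof.
move=> r0 r1 e0; have r01 : 0 <= r <= 1 by rewrite ltW.
have [s /andP[s0 sr]] := flowD_approx_left (fscale (-1) u) (fscale (-1) v) r0 r1 e0.
have s01 : 0 <= s <= 1 by rewrite !ltW // (lt_le_trans sr r1).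
rewrite !flow_fscaleN1 // => ?.
by exists s; rewrite ?s0 ?sr //; lra.
Qed.

Definition sum_level u v r := [set z | flow u r + flow v r <= z <= fupp u r + fupp v r].

Lemma level_addset u v r : 0 <= r <= 1 ->
  [set x + y | x in level u r & y in level v r] = sum_level u v r.
Proof. by move=> r01; rewrite !level_itv // addset_itv // flow_le_fupp. Qed.

Lemma sum_level_le u v r s z : 0 <= s -> s <= r -> r <= 1 ->
  sum_level u v r z -> sum_level u v s z.
Proof.
move=> s0 sr r1 /andP[? ?].
have := flow_le u s0 sr r1; have := flow_le v s0 sr r1.
have := fupp_ge u s0 sr r1; have := fupp_ge v s0 sr r1.
by move=> *; apply/andP; split; lra.
Qed.

Lemma sum_level_left u v r z : 0 < r -> r <= 1 ->
  (forall s, 0 < s < r -> sum_level u v s z) -> sum_level u v r z.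
Proof.
move=> r0 r1 below; apply/andP; split; rewrite leNgt; apply/negP => zr.
  have e0 : 0 < flow u r + flow v r - z by rewrite subr_gt0.
  have [s s0r] := flowD_approx_left u v r0 r1 e0.
  by have /andP[+ _] := below s s0r; lra.
have e0 : 0 < z - (fupp u r + fupp v r) by rewrite subr_gt0.
have [s s0r] := fuppD_approx_left u v r0 r1 e0.
by have /andP[_ +] := below s s0r; lra.
Qed.

Definition fsum_fun u v z := sup [set r | 0 < r <= 1 /\ sum_level u v r z].

Lemma fsum_fun_ge0 u v z : 0 <= fsum_fun u v z.
Proof. by apply: sup_ge0 => r [/andP[/ltW]]. Qed.

Lemma fsum_fun_le1 u v z : fsum_fun u v z <= 1.
Proof.
rewrite /fsum_fun; set W := [set r | _]; have [ne|/nonemptyPn->] := pselect (W !=set0).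
  by apply: ge_sup => // r [/andP[]].
by rewrite sup0 ler01.
Qed.

Lemma fsum_fun_level u v r z : 0 < r <= 1 -> (r <= fsum_fun u v z <-> sum_level u v r z).
Proof.
move=> /andP[r0 r1]; split => [rz|zr]; last first.
  apply: sup_upper_bound; last by split=> //; apply/andP.
  by split; [exists r; split=> //; apply/andP | exists 1 => s [/andP[]]].
apply: sum_level_left => // s /andP[s0 sr].
move: rz; rewrite /fsum_fun; set W := [set r | _] => rz.
have [ne|/nonemptyPn W0] := pselect (W !=set0); last by move: rz; rewrite W0 sup0 leNgt r0.
have [t [/andP[t0 t1] zt] st] := sup_gt ne (lt_le_trans sr rz).
exact: sum_level_le (ltW s0) (ltW st) t1 zt.
Qed.

Lemma fsum_fun_supp u v : closure [set z | 0 < fsum_fun u v z] = sum_level u v 0.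
Proof.
have l01 : 0 <= (0 : R) <= 1 by rewrite lexx ler01.
apply/seteqP; split.
  apply: closure_sub_itv => z /= z0; have z01 : 0 < fsum_fun u v z <= 1.
    by rewrite z0 fsum_fun_le1.
  have /(fsum_fun_level _ _ _ z01) := lexx (fsum_fun u v z).
  exact: sum_level_le (lexx 0) (fsum_fun_ge0 u v z) (fsum_fun_le1 u v z).
move=> z; rewrite -level_addset // !level0.
case=> x /closureRP near_x [y /closureRP near_y <-]; apply/closureRP => e e0.
have e2 : 0 < e / 2 by rewrite divr_gt0.
have [x' [/= ux' xx']] := near_x _ e2; have [y' [/= vy' yy']] := near_y _ e2.
exists (x' + y'); split.
  set m := Num.min (u x') (v y').
  have m01 : 0 < m <= 1 by rewrite lt_min ux' vy' ge_min fuzzy_le1.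
  apply: (lt_le_trans (proj1 (andP m01))); apply/(fsum_fun_level _ _ _ m01).
  rewrite -level_addset; last by case/andP: m01 => /ltW -> ->.
  case/andP: m01 => m0 _; exists x'; first by rewrite levelP //= ge_min lexx.
  by exists y'; rewrite // levelP //= ge_min lexx orbT.
rewrite opprD addrACA; apply: le_lt_trans (ler_normD _ _) _.
by rewrite (splitr e) ltrD.
Qed.

Lemma fsum_fun_convex u v x y l : 0 <= l <= 1 ->
  Num.min (fsum_fun u v x) (fsum_fun u v y) <= fsum_fun u v (l * x + (1 - l) * y).
Proof.
move=> /andP[l0 l1]; set m := Num.min _ _.
have [m0|m0] := lerP m 0; first exact: le_trans m0 (fsum_fun_ge0 _ _ _).
have m01 : 0 < m <= 1 by rewrite m0 ge_min fsum_fun_le1.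
have /(fsum_fun_level _ _ _ m01) /andP[? ?] : m <= fsum_fun u v x by rewrite ge_min lexx.
have /(fsum_fun_level _ _ _ m01) /andP[? ?] : m <= fsum_fun u v y by rewrite ge_min lexx orbT.
by apply/(fsum_fun_level _ _ _ m01); apply/andP; split; nra.
Qed.

Lemma fsum_fun_usc u v x e : 0 < e -> exists2 d, 0 < d &
  forall y, `|y - x| < d -> fsum_fun u v y < fsum_fun u v x + e.
Proof.
move=> e0; set r := fsum_fun u v x + e.
have [r1|r1] := ltrP 1 r; first by exists 1 => // y _; exact: le_lt_trans (fsum_fun_le1 _ _ _) r1.
have r01 : 0 < r <= 1 by rewrite r1 andbT /r ltr_pwDr ?fsum_fun_ge0.
have below_r y : ~ sum_level u v r y -> fsum_fun u v y < r.
  by move=> yr; rewrite ltNge; apply/negP => /(fsum_fun_level _ _ _ r01).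
have : ~ sum_level u v r x by move/(fsum_fun_level _ _ _ r01); rewrite /r leNgt ltrDl e0.
move/negP; rewrite negb_and -!ltNge => /orP[xr|xr].
  exists (flow u r + flow v r - x) => [|y]; first by rewrite subr_gt0.
  by rewrite ltr_norml => /andP[_ ?]; apply: below_r => /andP[? _]; lra.
exists (x - (fupp u r + fupp v r)) => [|y]; first by rewrite subr_gt0.
by rewrite ltr_norml => /andP[? _]; apply: below_r => /andP[_ ?]; lra.
Qed.

Lemma fsum_fun_fuzzy u v : is_fuzzy (fsum_fun u v).
Proof.
have r01 : 0 < (1 : R) <= 1 by rewrite ltr01 lexx.
split.
- by move=> z; rewrite fsum_fun_ge0 fsum_fun_le1.
- exists (flow u 1 + flow v 1); apply/eqP; rewrite eq_le fsum_fun_le1.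
  have core w : flow w 1 <= fupp w 1 by apply: flow_le_fupp; rewrite ler01 lexx.
  by apply/(fsum_fun_level _ _ _ r01); rewrite /sum_level /= lexx lerD.
- exact: fsum_fun_convex.
- exact: fsum_fun_usc.
- rewrite fsum_fun_supp.
  rewrite (_ : sum_level u v 0 = `[flow u 0 + flow v 0, fupp u 0 + fupp v 0]).
    exact: segment_compact.
  by apply/seteqP; split => z; rewrite /= in_itv.
Qed.

Definition fsum u v : fuzzy R := Fuzzy (fsum_fun_fuzzy u v).

Lemma level_fsum u v r : 0 <= r <= 1 -> level (fsum u v) r = sum_level u v r.
Proof.
case/andP; rewrite le_eqVlt => /orP[/eqP<-|r0] r1; first by rewrite level0 /= fsum_fun_supp.
have r01 : 0 < r <= 1 by rewrite r0 r1.
by rewrite levelP //; apply/seteqP; split => z /= /(fsum_fun_level _ _ _ r01).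
Qed.

Lemma level_fadd u v r : 0 <= r <= 1 ->
  level (fadd u v) r = [set x + y | x in level u r & y in level v r].
Proof.
move=> r01; rewrite /fadd; case: pselect => [summed|not_summed].
  by case: (cid summed) => w /= ->.
by exfalso; apply: not_summed; exists (fsum u v) => s s01; rewrite level_fsum ?level_addset.
Qed.

Lemma endpoints_fadd u v r : 0 <= r <= 1 ->
  flow (fadd u v) r = flow u r + flow v r /\ fupp (fadd u v) r = fupp u r + fupp v r.
Proof.
move=> r01; have := level_fadd u v r01; rewrite level_addset // level_itv //.
by apply: itv_inj; rewrite ?flow_le_fupp // lerD ?flow_le_fupp.
Qed.

Lemma faddI u : injective (fadd u).
Proof.
move=> v w uv_uw; apply: fuzzy_endpoints_ext => r r01.
have [uv_low uv_upp] := endpoints_fadd u v r01.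
have [uw_low uw_upp] := endpoints_fadd u w r01.
split; first by apply: (addrI (flow u r)); rewrite -uv_low -uw_low uv_uw.
by apply: (addrI (fupp u r)); rewrite -uv_upp -uw_upp uv_uw.
Qed.

Lemma fscale_fadd c u v : fscale c (fadd u v) = fadd (fscale c u) (fscale c v).
Proof.
apply: fuzzy_ext => r /andP[r0 r1]; have r01 : 0 <= r <= 1 by rewrite ltW.
rewrite level_fscale // !level_fadd // !level_fscale //; apply/seteqP; split => z /=.
  case=> _ [x ux [y vy <-]] <-; exists (c * x); first by exists x.
  by exists (c * y); [exists y|rewrite mulrDr].
case=> _ [x ux <-] [_ [y vy <-] <-]; exists (x + y); last by rewrite mulrDr.
by exists x => //; exists y.
Qed.

Lemma fadd_fzero u : fadd u (fzero R) = u.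
Proof.
apply: fuzzy_ext => r /andP[r0 r1]; have r01 : 0 <= r <= 1 by rewrite ltW.
rewrite level_fadd // level_fzero //; apply/seteqP; split => z /=.
  by case=> x ux [y -> <-]; rewrite addr0.
by move=> uz; exists z => //; exists 0; rewrite ?addr0.
Qed.

End FuzzySum.

Section HukuharaDerivative.
Variables (R : realType) (a b : R).
Hypothesis ab : a < b.
Implicit Types (u w g : fuzzy R) (f : R -> fuzzy R) (t c : R).

Lemma step_in_ab t d : in_ab a b t -> 0 < d ->
  exists2 h, 0 < h < d & t + h <= b \/ a <= t - h.
Proof.
move=> /andP[ta tb] d0; set h := Num.min d (b - a) / 2.
have m_gt0 : 0 < Num.min d (b - a) by rewrite lt_min d0 subr_gt0.
have md : Num.min d (b - a) <= d by rewrite ge_min lexx.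
have mba : Num.min d (b - a) <= b - a by rewrite ge_min lexx orbT.
exists h; first by apply/andP; split; rewrite /h; lra.
by have [th|th] := lerP (t + h) b; [left|right; rewrite /h in th *; lra].
Qed.

Lemma Hderiv_uniq f t g g' : in_ab a b t -> Hderiv_at a b f t g ->
  Hderiv_at a b f t g' -> g = g'.
Proof.
move=> t_ab fg fg'; apply: fD_eq0; apply/eqP; rewrite eq_le fD_ge0 andbT.
apply/ler_addgt0Pr => e e0; rewrite add0r.
have e2 : 0 < e / 2 by rewrite divr_gt0.
have [d1 d10 near_g] := fg _ e2; have [d2 d20 near_g'] := fg' _ e2.
have [h /andP[h0 hd] side] := step_in_ab t_ab (ltac:(by rewrite lt_min d10) : 0 < Num.min d1 d2).
have [hd1 hd2] : 0 < h < d1 /\ 0 < h < d2 by move: hd; rewrite lt_min h0 => /andP[-> ->].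
have close_both w : fD (fscale h^-1 w) g < e / 2 -> fD (fscale h^-1 w) g' < e / 2 ->
    fD g g' <= e.
  move=> wg wg'; apply: le_trans (fD_triangle g (fscale h^-1 w) g') _.
  by rewrite fDC (splitr e) ltW // ltrD.
have [[upg downg] [upg' downg']] := (near_g h hd1, near_g' h hd2).
case: side => [th|th].
  have [w1 e1 w1g] := upg th; have [w2 e2' w2g'] := upg' th.
  have w12 : w1 = w2 := faddI (etrans (esym e1) e2').
  by subst w2; exact: close_both w1g w2g'.
have [w1 e1 w1g] := downg th; have [w2 e2' w2g'] := downg' th.
have w12 : w1 = w2 := faddI (etrans (esym e1) e2').
by subst w2; exact: close_both w1g w2g'.
Qed.

Lemma Hderiv_scale f t g c : Hderiv_at a b f t g ->
  Hderiv_at a b (fun s => fscale c (f s)) t (fscale c g).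
Proof.
move=> fg e e0; have c1 : 0 < `|c| + 1 by rewrite ltr_wpDl.
have [d d0 near_g] := fg _ (divr_gt0 e0 c1); exists d => // h h0d.
have scale_close w : fD (fscale h^-1 w) g < e / (`|c| + 1) ->
    fD (fscale h^-1 (fscale c w)) (fscale c g) < e.
  by move=> wg; rewrite fscaleA mulrC -fscaleA; exact: fD_fscale_lt.
have [up down] := near_g h h0d; split => [th|th].
  have [w fw wg] := up th; exists (fscale c w); last exact: scale_close.
  by rewrite fw fscale_fadd.
have [w fw wg] := down th; exists (fscale c w); last exact: scale_close.
by rewrite fw fscale_fadd.
Qed.

Lemma Hderiv_fzero t : Hderiv_at a b (fun=> fzero R) t (fzero R).
Proof.
move=> e e0; exists 1 => // h _.
by split=> _; exists (fzero R); rewrite ?fadd_fzero ?fscale_fzero ?fDxx.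
Qed.

Lemma hderiv_fzero t : hderiv a b (fun=> fzero R) t = fzero R.
Proof.
rewrite /hderiv; case: pselect => [has_deriv|//]; case: (cid has_deriv) => g /= [t_ab fg].
exact: Hderiv_uniq t_ab fg (Hderiv_fzero t).
Qed.

Lemma hderiv_scale f c t :
  hderiv a b (fun s => fscale c (f s)) t = fscale c (hderiv a b f t).
Proof.
have [->|c0] := eqVneq c 0.
  rewrite fscale0 (_ : (fun s => _) = fun=> fzero R) ?hderiv_fzero //.
  by apply: funext => s; rewrite fscale0.
rewrite /hderiv; case: pselect => [dcf|no_dcf]; case: pselect => [df|no_df].
- case: (cid dcf) => g1 /= [t_ab cfg1]; case: (cid df) => g0 /= [_ fg0].
  exact: Hderiv_uniq t_ab cfg1 (Hderiv_scale c fg0).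
- exfalso; apply: no_df; case: dcf => g1 [t_ab cfg1]; exists (fscale c^-1 g1); split => //.
  have := Hderiv_scale c^-1 cfg1; congr Hderiv_at; apply: funext => s.
  by rewrite fscaleA mulVf // fscale1.
- by exfalso; apply: no_dcf; case: df => g0 [t_ab fg0]; exists (fscale c g0); split => //; exact: Hderiv_scale.
- by rewrite fscale_fzero.
Qed.

Lemma iter_hderiv_scale f c i :
  iter i (hderiv a b) (fun s => fscale c (f s)) =
  (fun s => fscale c (iter i (hderiv a b) f s)).
Proof.
by elim: i => [//|i IH]; rewrite !iterS IH; apply: funext => t; exact: hderiv_scale.
Qed.

Lemma iter_hderiv_fzero i : iter i (hderiv a b) (fun=> fzero R) = (fun=> fzero R).
Proof.
by elim: i => [//|i IH]; rewrite iterS IH; apply: funext => t; exact: hderiv_fzero.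
Qed.

End HukuharaDerivative.

Section HomogeneousSpaces.
Variable R : realType.
Implicit Types (c : R) (u : fuzzy R) (F : R -> fuzzy R) (x : nat -> fuzzy R).

Definition homogeneous_space (s : fspace R) :=
  [/\ smem (szero s),
      (forall c (x : carrier s), smem x -> smem (sscale c x)),
      (forall c (x : carrier s), smem x -> snorm (sscale c x) = `|c| * snorm x),
      (forall x : carrier s, sscale 0 x = szero s) &
      (forall x : carrier s, 0 <= snorm x)].

Lemma fDstar_ge0 a b F G : 0 <= fDstar a b F G.
Proof. by apply: sup_ge0 => _ [t _ <-]; exact: fD_ge0. Qed.

Lemma fDstar0_fscale a b c F :
  fDstar a b (fun=> fzero R) (fun t => fscale c (F t)) = `|c| * fDstar a b (fun=> fzero R) F.
Proof.
by rewrite /fDstar -sup_imageZ //; congr sup; apply: eq_imagel => t _; exact: fD0_fscale.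
Qed.

Lemma zero_out_fscale a b c F : zero_out a b F -> zero_out a b (fun t => fscale c (F t)).
Proof. by move=> F0 t t_ab; rewrite F0 // fscale_fzero. Qed.

Lemma fcont_on_fzero a b : fcont_on a b (fun=> fzero R).
Proof. by move=> t _ e e0; exists 1 => // s _ _; rewrite fDxx. Qed.

Lemma fcont_on_fscale a b c F : fcont_on a b F -> fcont_on a b (fun t => fscale c (F t)).
Proof.
move=> cF t t_ab e e0; have c1 : 0 < `|c| + 1 by rewrite ltr_wpDl.
have [d d0 near_t] := cF t t_ab _ (divr_gt0 e0 c1).
by exists d => // s s_ab st; apply: fD_fscale_lt => //; exact: near_t.
Qed.

Lemma mu_sup0_fscale c x :
  mu_sup (fun=> fzero R) (fun n => fscale c (x n)) = `|c| * mu_sup (fun=> fzero R) x.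
Proof.
by rewrite /mu_sup -sup_imageZ //; congr sup; apply: eq_imagel => n _; exact: fD0_fscale.
Qed.

Lemma mu_sup_ge0 x y : 0 <= mu_sup x y.
Proof. by apply: sup_ge0 => _ [n _ <-]; exact: fD_ge0. Qed.

Lemma homogeneous_RF : homogeneous_space (S_RF R).
Proof. by split=> // [c u _|u|u]; [exact: fD0_fscale|exact: fscale0|exact: fD_ge0]. Qed.

Lemma homogeneous_C a b : homogeneous_space (S_C a b).
Proof.
split=> [|c F [F0 cF]|c F _|F|F]; last exact: fDstar_ge0.
- by split=> [t _|]; last exact: fcont_on_fzero.
- by split; [exact: zero_out_fscale|exact: fcont_on_fscale].
- exact: fDstar0_fscale.
- by apply: funext => t /=; exact: fscale0.
Qed.

Lemma homogeneous_Cp a b p : a < b -> homogeneous_space (S_Cp a b p).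
Proof.
move=> ab; split=> [|c F [F0 dF]|c F _|F|F].
- split=> [t _ //|i ip]; rewrite iter_hderiv_fzero //.
  by split=> [|_ t _]; [exact: fcont_on_fzero|exists (fzero R); exact: Hderiv_fzero].
- split=> [|i ip]; first exact: zero_out_fscale.
  rewrite /= iter_hderiv_scale //; have [cF diffF] := dF i ip.
  split=> [|ip' t t_ab]; first exact: fcont_on_fscale.
  by have [g Fg] := diffF ip' t t_ab; exists (fscale c g); exact: Hderiv_scale.
- rewrite /snorm /= big_distrr /=; apply: eq_bigr => i _.
  by rewrite !iter_hderiv_fzero // iter_hderiv_scale // fDstar0_fscale.
- by apply: funext => t /=; exact: fscale0.
- by apply: sumr_ge0 => i _; exact: fDstar_ge0.
Qed.

Lemma homogeneous_m : homogeneous_space (S_m R).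
Proof.
split=> [|c x [M xM]|c x _|x|x]; last exact: mu_sup_ge0.
- by exists 0 => n; rewrite fDxx.
- exists (`|c| * M) => n /=; rewrite fDC fD0_fscale fDC.
  by rewrite ler_wpM2l.
- exact: mu_sup0_fscale.
- by apply: funext => n /=; exact: fscale0.
Qed.

Lemma homogeneous_c : homogeneous_space (S_c R).
Proof.
split=> [|c x [l xl]|c x _|x|x]; last exact: mu_sup_ge0.
- by exists (fzero R) => e e0; exists 0%N => n _; rewrite fDxx.
- exists (fscale c l) => e e0; have c1 : 0 < `|c| + 1 by rewrite ltr_wpDl.
  have [N xN] := xl _ (divr_gt0 e0 c1); exists N => n Nn.
  by apply: fD_fscale_lt => //; exact: xN.
- exact: mu_sup0_fscale.
- by apply: funext => n /=; exact: fscale0.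
Qed.

Lemma homogeneous_c0 : homogeneous_space (S_c0 R).
Proof.
split=> [|c x x0|c x _|x|x]; last exact: mu_sup_ge0.
- by move=> e e0; exists 0%N => n _; rewrite fDxx.
- move=> e e0; have c1 : 0 < `|c| + 1 by rewrite ltr_wpDl.
  have [N xN] := x0 _ (divr_gt0 e0 c1); exists N => n Nn.
  by rewrite -(fscale_fzero c); apply: fD_fscale_lt => //; exact: xN.
- exact: mu_sup0_fscale.
- by apply: funext => n /=; exact: fscale0.
Qed.

Lemma powRM_powRV (k X p : R) : 0 < p -> 0 <= k -> 0 <= X ->
  (k `^ p * X) `^ p^-1 = k * X `^ p^-1.
Proof.
by move=> p0 k0 X0; rewrite powRM ?powR_ge0 // -powRrM mulfV ?gt_eqF ?powRr1.
Qed.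

(* [G] is a pointwise copy of [H], so that callers need not rewrite under the integral. *)
Lemma integral_powRZ (D : set R) (F G H : R -> R) (k p : R) : measurable D ->
  0 < p -> 0 <= k -> (forall t, 0 <= H t) ->
  (forall t, F t = k * H t) -> (forall t, G t = H t) ->
  lebesgue_measure.-integrable D (fun t => ((H t) `^ p)%:E) ->
  fine (\int[lebesgue_measure]_(t in D) ((F t) `^ p)%:E) `^ p^-1 =
  k * fine (\int[lebesgue_measure]_(t in D) ((G t) `^ p)%:E) `^ p^-1.
Proof.
move=> mD p0 k0 H0 FH GH intH.
under eq_integral => t _ do rewrite FH powRM ?H0 // EFinM.
under [in RHS]eq_integral => t _ do rewrite GH.
rewrite integralZl // fineM ?integrable_fin_num // powRM_powRV //.
by apply: fine_ge0; apply: integral_ge0 => t _; rewrite lee_fin powR_ge0.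
Qed.

Lemma nneseries_powRZ (F H : nat -> R) (k p : R) : 0 <= k -> (forall n, 0 <= H n) ->
  (forall n, F n = k * H n) ->
  (\sum_(n <oo) ((F n) `^ p)%:E = (k `^ p)%:E * \sum_(n <oo) ((H n) `^ p)%:E)%E.
Proof.
move=> k0 H0 FH; rewrite -nneseriesZl => [|n _]; last by rewrite lee_fin powR_ge0.
by apply: eq_eseriesr => n _; rewrite FH powRM // EFinM.
Qed.

Lemma nneseries_powRZ_lty (F H : nat -> R) (k p : R) : 0 <= k -> (forall n, 0 <= H n) ->
  (forall n, F n = k * H n) -> (\sum_(n <oo) ((H n) `^ p)%:E < +oo)%E ->
  (\sum_(n <oo) ((F n) `^ p)%:E < +oo)%E.
Proof.
move=> k0 H0 FH finH; rewrite (nneseries_powRZ _ k0 H0 FH).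
by apply: lte_mul_pinfty; rewrite ?lee_fin ?powR_ge0.
Qed.

Lemma fine_nneseries_powRZ (F G H : nat -> R) (k p : R) : 0 < p -> 0 <= k ->
  (forall n, 0 <= H n) -> (forall n, F n = k * H n) -> (forall n, G n = H n) ->
  (\sum_(n <oo) ((H n) `^ p)%:E < +oo)%E ->
  (fine (\sum_(n <oo) ((F n) `^ p)%:E)) `^ p^-1 =
  k * (fine (\sum_(n <oo) ((G n) `^ p)%:E)) `^ p^-1.
Proof.
move=> p0 k0 H0 FH GH finH; rewrite (nneseries_powRZ _ k0 H0 FH).
rewrite (eq_eseriesr (fun n _ => congr1 (fun y => (y `^ p)%:E) (GH n))).
have sum_ge0 : (0 <= \sum_(n <oo) ((H n) `^ p)%:E)%E.
  by apply: nneseries_ge0 => n _; rewrite lee_fin powR_ge0.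
rewrite fineM // ?ge0_fin_numE // powRM_powRV //; exact: fine_ge0.
Qed.

Lemma homogeneous_Lp (a b p : R) : 1 <= p -> homogeneous_space (S_Lp a b p).
Proof.
move=> p1; have p0 : 0 < p by exact: lt_le_trans ltr01 p1.
have mab : measurable `[a, b] by exact: measurable_itv.
split=> [|c F [F0 mF intF]|c F [_ _ intF]|F|F]; last exact: powR_ge0.
- split=> [t _ //|r _|].
    by split; [exact: (@measurable_cst _ _ R R `[a, b] (flow (fzero R) r))
              |exact: (@measurable_cst _ _ R R `[a, b] (fupp (fzero R) r))].
  rewrite (_ : (fun t => _) = cst 0%E); first exact: integrable0.
  by apply: funext => t; rewrite fDxx powR0 ?gt_eqF.
- split=> [|r r01 /=|]; first exact: zero_out_fscale.
    have [m_low m_upp] := mF r r01.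
    have mZ g h : measurable_fun `[a, b] g -> (forall t, h t = c * g t) ->
        measurable_fun `[a, b] h.
      move=> mg gh; have mcg : measurable_fun `[a, b] (fun t => c * g t).
        by apply: measurable_realfun.measurable_funM => //; exact: measurable_cst.
      by apply: eq_measurable_fun mcg => t _; rewrite gh.
    case: (boolP (0 <= c)) => c0; split.
    + by apply: (mZ _ _ m_low) => t; rewrite flow_fscale // c0.
    + by apply: (mZ _ _ m_upp) => t; rewrite fupp_fscale // c0.
    + by apply: (mZ _ _ m_upp) => t; rewrite flow_fscale // (negbTE c0).
    + by apply: (mZ _ _ m_low) => t; rewrite fupp_fscale // (negbTE c0).
  rewrite (_ : (fun t => (fD (fscale c (F t)) (fzero R) `^ p)%:E) =
    fun t => (`|c| `^ p)%:E * (fD (F t) (fzero R) `^ p)%:E)%E; first exact: integrableZl.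
  by apply: funext => t /=; rewrite fDC fD0_fscale fDC powRM ?fD_ge0 // EFinM.
- rewrite /snorm /= /fDp; apply: (integral_powRZ mab p0 (normr_ge0 c) _ _ _ intF).
  + by move=> t; exact: fD_ge0.
  + by move=> t; rewrite fD0_fscale fDC.
  + by move=> t; rewrite fDC.
- by apply: funext => t /=; exact: fscale0.
Qed.

Lemma homogeneous_lp (p : R) : 1 <= p -> homogeneous_space (S_lp p).
Proof.
move=> p1; have p0 : 0 < p by exact: lt_le_trans ltr01 p1.
split=> [|c x finx|c x finx|x|x]; last exact: powR_ge0.
- by rewrite /= /is_lp eseries0 ?ltry // => n _ _; rewrite fDxx powR0 ?gt_eqF.
- apply: (nneseries_powRZ_lty (normr_ge0 c) _ _ finx) => n; first exact: fD_ge0.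
  by rewrite fDC fD0_fscale fDC.
- rewrite /snorm /= /rho_p; apply: (fine_nneseries_powRZ p0 (normr_ge0 c) _ _ _ finx).
  + by move=> n; exact: fD_ge0.
  + by move=> n; rewrite fD0_fscale fDC.
  + by move=> n; rewrite fDC.
- by apply: funext => n /=; exact: fscale0.
Qed.

Lemma homogeneous_prod (s1 s2 : fspace R) : homogeneous_space s1 -> homogeneous_space s2 ->
  homogeneous_space (S_prod s1 s2).
Proof.
case=> z1 mZ1 nZ1 sc1 n1 [z2 mZ2 nZ2 sc2 n2].
split=> [//|c [x1 x2] [m1 m2]|c [x1 x2] [m1 m2]|[x1 x2]|[x1 x2]].
- by split; [exact: mZ1|exact: mZ2].
- by rewrite /snorm /= -!/(snorm _) nZ1 // nZ2 // maxr_pMr.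
- by rewrite /= sc1 sc2.
- by rewrite /snorm /= le_max -/(snorm _) n1.
Qed.

Lemma wf_space_homogeneous (s : fspace R) : wf_space s -> homogeneous_space s.
Proof.
elim: s => [|a b|a b p|a b p|p| | | |s1 IH1 s2 IH2] /=.
- by move=> _; exact: homogeneous_RF.
- by move=> _; exact: homogeneous_C.
- by case=> _; exact: homogeneous_Lp.
- exact: homogeneous_Cp.
- exact: homogeneous_lp.
- by move=> _; exact: homogeneous_m.
- by move=> _; exact: homogeneous_c.
- by move=> _; exact: homogeneous_c0.
- by case=> /IH1 h1 /IH2 h2; exact: homogeneous_prod.
Qed.

End HomogeneousSpaces.

Section OperatorNorm.
Variables (R : realType) (X : Type) (mem : X -> Prop) (N F : X -> R) (sc : R -> X -> X).
Hypothesis memZ : forall c x, mem x -> mem (sc c x).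
Hypothesis NZ : forall c x, mem x -> N (sc c x) = `|c| * N x.
Hypothesis N_ge0 : forall x, 0 <= N x.
Hypothesis FZ : forall c x, mem x -> F (sc c x) = `|c| * F x.
Hypothesis F_ge0 : forall x, 0 <= F x.
Hypothesis F_cont0 : exists2 d, 0 < d & forall x, mem x -> N x < d -> F x < 1.

Definition opnorm := inf [set M | 0 < M /\ forall x, mem x -> F x <= M * N x].

Lemma F_null x : mem x -> N x = 0 -> F x = 0.
Proof.
move=> mx Nx0; apply/eqP; rewrite eq_le F_ge0 andbT leNgt; apply/negP => Fx.
have [d d0 small] := F_cont0.
have := small (sc (2 / F x) x) (memZ _ mx); rewrite NZ // Nx0 mulr0 => /(_ d0).
by rewrite FZ // ger0_norm ?divr_ge0 ?ltW // divfK ?gt_eqF // ltNge ler1n.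
Qed.

(* Rescale [x] to norm [d / 2], where [F] is below [1]. *)
Lemma F_le_N : exists2 M, 0 < M & forall x, mem x -> F x <= M * N x.
Proof.
have [d d0 small] := F_cont0; exists (2 / d) => [|x mx]; first by rewrite divr_gt0.
have [Nx0|Nx0] := eqVneq (N x) 0; first by rewrite F_null // Nx0 mulr0.
have Nx : 0 < N x by rewrite lt0r Nx0 N_ge0.
set c := d / (2 * N x); have c0 : 0 < c by rewrite divr_gt0 // mulr_gt0.
have := small (sc c x) (memZ _ mx); rewrite NZ // FZ // gtr0_norm //.
have -> : c * N x = d / 2 by rewrite /c; field; rewrite gt_eqF.
move=> /(_ ltac:(lra)) /ltW Fc; rewrite -(ler_pM2l c0) mulrA.
suff -> : c * (2 / d) = (N x)^-1 by rewrite mulVf.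
by rewrite /c; field; rewrite !gt_eqF.
Qed.

Lemma le_opnorm x : mem x -> F x <= opnorm * N x.
Proof.
move=> mx; have [Nx0|Nx0] := eqVneq (N x) 0; first by rewrite F_null // Nx0 mulr0.
have Nx : 0 < N x by rewrite lt0r Nx0 N_ge0.
have [M M0 FM] := F_le_N.
rewrite -ler_pdivrMr //; apply: lb_le_inf => [|K [K0 FK]]; first by exists M.
by rewrite ler_pdivrMr // FK.
Qed.

Lemma opnorm_sup (x0 : X) : mem x0 ->
  opnorm = sup [set F x | x in [set x | mem x /\ N x <= 1]].
Proof.
move=> mx0; set B := [set F x | x in _].
have B0 : B !=set0.
  exists (F (sc 0 x0)), (sc 0 x0) => //.
  by split; [exact: memZ|rewrite NZ // normr0 mul0r ler01].
have [M M0 FM] := F_le_N.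
have opnorm_ge0 : 0 <= opnorm by apply: lb_le_inf => [|K [/ltW]]; first by exists M.
have B_opnorm : ubound B opnorm.
  move=> _ [x [mx Nx1] <-]; apply: le_trans (le_opnorm mx) _; exact: ler_piMr.
apply/eqP; rewrite eq_le ge_sup // andbT.
have supB : has_sup B by split => //; exists opnorm.
have FB x : mem x -> F x <= sup B * N x.
  move=> mx; have [Nx0|Nx0] := eqVneq (N x) 0; first by rewrite F_null // Nx0 mulr0.
  have Nx : 0 < N x by rewrite lt0r Nx0 N_ge0.
  have unit : B (F (sc (N x)^-1 x)).
    exists (sc (N x)^-1 x) => //; split; first exact: memZ.
    by rewrite NZ // ger0_norm ?invr_ge0 // mulVf ?gt_eqF.
  move: (sup_upper_bound supB unit); rewrite FZ // ger0_norm ?invr_ge0 //.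
  by rewrite mulrC -ler_pdivrMr // mulrC.
have B_ge0 : 0 <= sup B by apply: sup_ge0 => _ [x _ <-].
apply/ler_addgt0Pr => e e0; apply: ge_inf; first by exists 0 => K [/ltW].
split=> [|x mx]; first by rewrite ltr_wpDl.
by apply: le_trans (FB x mx) _; rewrite ler_wpM2r // lerDl ltW.
Qed.

End OperatorNorm.

Theorem theorem3p3 (R : realType) (s : fspace R) : wf_space s ->
  (forall A : carrier s -> R,
     lin_functional A -> cont0_functional A ->
     (forall x, smem x -> `|A x| <= opnorm_functional A * snorm x) /\
     opnorm_functional A = sup [set `|A x| | x in [set x | smem x /\ snorm x <= 1]]) /\
  (forall A : carrier s -> carrier s,
     lin_operator A -> cont0_operator A ->
     (forall x, smem x -> snorm (A x) <= opnorm_operator A * snorm x) /\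
     opnorm_operator A = sup [set snorm (A x) | x in [set x | smem x /\ snorm x <= 1]]).
Proof.
move=> /wf_space_homogeneous [mem0 memZ NZ sc0 N_ge0].
have sc00 : sscale 0 (szero s) = szero s by exact: sc0.
split=> [A [_ AZ] cA|A [memA [_ AZ]] cA].
- have A0 : A (szero s) = 0 by rewrite -sc00 AZ // mul0r.
  have FZ c x : smem x -> `|A (sscale c x)| = `|c| * `|A x| by move=> mx; rewrite AZ // normrM.
  have F_cont0 : exists2 d, 0 < d & forall x, smem x -> snorm x < d -> `|A x| < 1.
    by have [d d0 near0] := cA 1 ltr01; exists d => // x mx /(near0 x mx); rewrite A0 subr0.
  split=> [x mx|]; first exact: (le_opnorm memZ NZ N_ge0 FZ _ F_cont0).
  exact: (opnorm_sup memZ NZ N_ge0 FZ _ F_cont0 mem0).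
- have A0 : A (szero s) = szero s by rewrite -sc00 AZ // sc0.
  have FZ c x : smem x -> snorm (A (sscale c x)) = `|c| * snorm (A x).
    by move=> mx; rewrite AZ // NZ //; exact: memA.
  have F_cont0 : exists2 d, 0 < d & forall x, smem x -> snorm x < d -> snorm (A x) < 1.
    by have [d d0 near0] := cA 1 ltr01; exists d => // x mx /(near0 x mx); rewrite A0.
  split=> [x mx|]; first exact: (le_opnorm memZ NZ N_ge0 FZ _ F_cont0).
  exact: (opnorm_sup memZ NZ N_ge0 FZ _ F_cont0 mem0).
Qed.
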